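(* Let $\mathcal{A}$ be a finite totally ordered alphabet and let $\mathbf{Ch}(\mathcal{A})$ be the Chinese monoid over $\mathcal{A}$. Then $\mathbf{Ch}(\mathcal{A})$ is of type 1: for every function $\sigma:\mathcal{A}\to\mathbb{N}_{\geq 2}$, the map $\phi_\sigma=\theta\times\operatorname{ev}_\sigma:\mathbf{Ch}(\mathcal{A},\sigma)\to \mathbf{Ch}(\mathcal{A},2)\times\mathbf{Com}(\mathcal{A},\sigma)$ is injective.
   Context: The Chinese monoid $\mathbf{Ch}(\mathcal{A})$ is the quotient of the free monoid $\mathcal{A}^*$ by the relations $cba=cab=bca$ for $a<b<c$, and $aba=baa$, $bba=bab$ for $a<b$ ($a,b,c\in\mathcal{A}$). For $\sigma:\mathcal{A}\to\mathbb{N}_{\geq2}$, $\mathbf{Ch}(\mathcal{A},\sigma)$ is the quotient of $\mathbf{Ch}(\mathcal{A})$ obtained by adding the relations $a^{\sigma(a)}=a$ for every $a\in\mathcal{A}$; $\mathbf{Ch}(\mathcal{A},2)$ is the case where $\sigma$ is constant equal to $2$. $\mathbf{Com}(\mathcal{A},\sigma)$ is the quotient of the free commutative monoid on $\mathcal{A}$ by the relations $a^{\sigma(a)}=a$, $a\in\mathcal{A}$. The maps $\theta:\mathbf{Ch}(\mathcal{A},\sigma)\to\mathbf{Ch}(\mathcal{A},2)$ and $\operatorname{ev}_\sigma:\mathbf{Ch}(\mathcal{A},\sigma)\to\mathbf{Com}(\mathcal{A},\sigma)$ are the natural surjective morphisms (induced by the identity on $\mathcal{A}$), and $\phi_\sigma(x)=(\theta(x),\operatorname{ev}_\sigma(x))$.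 *)

From mathcomp Require Import all_boot all_order.
Set Implicit Arguments. Unset Strict Implicit. Unset Printing Implicit Defensive.
Import Order.TTheory.
Local Open Scope order_scope.

(* Monoids presented as quotients of the free monoid seq A by the congruence
   generated by a set of defining relations R (pairs of words). *)
Section Pres.
Variable A : Type.
Variable R : seq A -> seq A -> Prop.

Inductive cong : seq A -> seq A -> Prop :=
| cong_step u v l r : R l r -> cong (u ++ l ++ v) (u ++ r ++ v)
| cong_refl x : cong x x
| cong_sym x y : cong x y -> cong y x
| cong_trans x y z : cong x y -> cong y z -> cong x z.
End Pres.

Section Chinese.
Variables (d : Order.disp_t) (A : finOrderType d).

Inductive ch_rel : seq A -> seq A -> Prop :=
| ch_cba_cab a b c : a < b -> b < c -> ch_rel [:: c; b; a] [:: c; a; b]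
| ch_cab_bca a b c : a < b -> b < c -> ch_rel [:: c; a; b] [:: b; c; a]
| ch_aba_baa a b : a < b -> ch_rel [:: a; b; a] [:: b; a; a]
| ch_bba_bab a b : a < b -> ch_rel [:: b; b; a] [:: b; a; b].

Inductive pow_rel (sigma : A -> nat) : seq A -> seq A -> Prop :=
| pow_r a : pow_rel sigma (nseq (sigma a) a) [:: a].

Definition chs_rel (sigma : A -> nat) (x y : seq A) : Prop :=
  ch_rel x y \/ pow_rel sigma x y.

Inductive comm_rel : seq A -> seq A -> Prop :=
| comm_r a b : comm_rel [:: a; b] [:: b; a].

Definition com_rel (sigma : A -> nat) (x y : seq A) : Prop :=
  comm_rel x y \/ pow_rel sigma x y.

Definition ChEq (sigma : A -> nat) := cong (chs_rel sigma).
Definition Ch2Eq := cong (chs_rel (fun _ => 2%N)).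
Definition ComEq (sigma : A -> nat) := cong (com_rel sigma).
End Chinese.

(* For sigma >= 2, doubling one occurrence of a letter a in a word is a
   well defined operation on Ch(A, sigma): the square slides, a a u a = a u a a, so it
   does not matter which occurrence is doubled, and doubling respects every defining
   relation. These doublings commute, and doubling a letter a some multiple of
   sigma(a) - 1 times in a row does nothing. Since Ch(A, 2) is Ch(A, sigma) modulo a a = a, words
   equal in Ch(A, 2) become equal in Ch(A, sigma) after doubling letters according to
   some s and t. Equality in Com(A, sigma) fixes the support and the letter counts modulo
   sigma(b) - 1, so s and t agree modulo sigma(b) - 1 on the support, and one further
   padding of doublings cancels both. *)

From mathcomp Require Import all_boot all_order zify.
Set Implicit Arguments. Unset Strict Implicit. Unset Printing Implicit Defensive.
Import Order.TTheory.

Section Congruence.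
Variables (A : Type) (R : seq A -> seq A -> Prop).

Lemma cong_rel l r : R l r -> cong R l r.
Proof. by move=> H; have := cong_step [::] [::] H; rewrite /= !cats0. Qed.

Lemma cong_ctx p q l r : cong R l r -> cong R (p ++ l ++ q) (p ++ r ++ q).
Proof.
elim=> [u v l' r' H | x | x y _ IH | x y z _ IH1 _ IH2].
- by have := cong_step (p ++ u) (v ++ q) H; rewrite -!catA.
- exact: cong_refl.
- exact: cong_sym.
- exact: cong_trans IH2.
Qed.

Lemma cong_catl p l r : cong R l r -> cong R (p ++ l) (p ++ r).
Proof. by move/(cong_ctx p [::]); rewrite !cats0. Qed.

Lemma cong_catr q l r : cong R l r -> cong R (l ++ q) (r ++ q).
Proof. exact: cong_ctx [::] q l r. Qed.

Lemma cong_invariant (T : Type) (f : seq A -> T) :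
  (forall u v l r, R l r -> f (u ++ l ++ v) = f (u ++ r ++ v)) ->
  forall x y, cong R x y -> f x = f y.
Proof. by move=> fR x y; elim=> [u v l r /fR | | ? ? _ -> | ? ? ? _ -> _ ->]. Qed.

End Congruence.

Section CountClass.
Variable A : eqType.

(* With m = sigma b - 1 and b ranging over A, these classes determine the image of w
   in Com(A, sigma). *)
Definition count_class (b : A) (m : nat) (w : seq A) := (b \in w, count_mem b w %% m).

Lemma count_class_ctx b m u v l r : count_class b m l = count_class b m r ->
  count_class b m (u ++ l ++ v) = count_class b m (u ++ r ++ v).
Proof.
case=> mem_lr count_lr; rewrite /count_class !mem_cat !count_cat mem_lr.
by rewrite addnCA [in RHS]addnCA -modnDml count_lr modnDml.
Qed.

Lemma perm_count_class b m l r : perm_eq l r -> count_class b m l = count_class b m r.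
Proof. by move=> lr; rewrite /count_class (perm_mem lr) (permP lr). Qed.

End CountClass.

Section ChineseMonoid.
Variables (d : Order.disp_t) (A : finOrderType d) (sigma : A -> nat).
Hypothesis sigma_ge2 : forall a : A, 2 <= sigma a.

Local Notation "u ≡ v" := (cong (chs_rel sigma) u v) (at level 70, no associativity).
Implicit Types (a b c x y z : A) (u v w p q l r s t : seq A).

Lemma ch_cba_cab_eq a b c : (a < b)%O -> (b < c)%O -> [:: c; b; a] ≡ [:: c; a; b].
Proof. by move=> ab bc; apply/cong_rel; left; constructor. Qed.

Lemma ch_cab_bca_eq a b c : (a < b)%O -> (b < c)%O -> [:: c; a; b] ≡ [:: b; c; a].
Proof. by move=> ab bc; apply/cong_rel; left; constructor. Qed.

Lemma ch_aba_baa_eq a b : (a < b)%O -> [:: a; b; a] ≡ [:: b; a; a].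
Proof. by move=> ab; apply/cong_rel; left; constructor. Qed.

Lemma ch_bba_bab_eq a b : (a < b)%O -> [:: b; b; a] ≡ [:: b; a; b].
Proof. by move=> ab; apply/cong_rel; left; constructor. Qed.

Lemma ch_pow_eq a : nseq (sigma a) a ≡ [:: a].
Proof. by apply/cong_rel; right; constructor. Qed.

Lemma cancel_square_l a w w' : a :: a :: w ≡ a :: a :: w' -> a :: w ≡ a :: w'.
Proof.
have pow_a : nseq (sigma a) a = nseq (sigma a - 2) a ++ [:: a; a].
  by rewrite -[[:: a; a]]/(nseq 2 a) -nseqD subnK.
move=> H; have pow_w u : nseq (sigma a - 2) a ++ a :: a :: u ≡ a :: u.
  by have := cong_catr u (ch_pow_eq a); rewrite pow_a -catA.
apply: cong_trans (pow_w w'); apply: cong_trans (cong_sym (pow_w w)) _.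
exact: cong_catl.
Qed.

Lemma cancel_square_r a w w' : w ++ [:: a; a] ≡ w' ++ [:: a; a] -> w ++ [:: a] ≡ w' ++ [:: a].
Proof.
have pow_a : nseq (sigma a) a = [:: a; a] ++ nseq (sigma a - 2) a.
  by rewrite -[[:: a; a]]/(nseq 2 a) -nseqD addnC subnK.
move=> H; have pow_w u : (u ++ [:: a; a]) ++ nseq (sigma a - 2) a ≡ u ++ [:: a].
  by have := cong_catl u (ch_pow_eq a); rewrite pow_a catA.
apply: cong_trans (pow_w w'); apply: cong_trans (cong_sym (pow_w w)) _.
exact: cong_catr.
Qed.

Lemma ch_caba_caab a b c : (a < b)%O -> (b < c)%O -> [:: c; a; b; a] ≡ [:: c; a; a; b].
Proof.
move=> ab bc; have ac := lt_trans ab bc; apply: cancel_square_l.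
apply: (cong_trans (y := [:: c; a; c; b; a])); first exact: cong_catr (ch_bba_bab_eq ac).
apply: (cong_trans (y := [:: c; a; c; a; b])).
  exact: (cong_catl [:: c; a] (ch_cba_cab_eq ab bc)).
exact: cong_catr (cong_sym (ch_bba_bab_eq ac)).
Qed.

Lemma ch_cbaa_caab a b c : (a < b)%O -> (b < c)%O -> [:: c; b; a; a] ≡ [:: c; a; a; b].
Proof.
move=> ab bc; apply: (cong_trans (y := [:: c; a; b; a])); last exact: ch_caba_caab.
exact: (cong_catr [:: a] (ch_cba_cab_eq ab bc)).
Qed.

Lemma ch_caab_bcaa a b c : (a < b)%O -> (b < c)%O -> [:: c; a; a; b] ≡ [:: b; c; a; a].
Proof.
move=> ab bc; apply: (cong_trans (y := [:: c; a; b; a])); first exact/cong_sym/ch_caba_caab.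
exact: (cong_catr [:: a] (ch_cab_bca_eq ab bc)).
Qed.

Lemma ch_ccab_bcca a b c : (a < b)%O -> (b < c)%O -> [:: c; c; a; b] ≡ [:: b; c; c; a].
Proof.
move=> ab bc; have ac := lt_trans ab bc.
apply: (cong_trans (y := [:: c; b; c; a])); first exact: (cong_catl [:: c] (ch_cab_bca_eq ab bc)).
apply: (cancel_square_r (w := [:: c; b; c]) (w' := [:: b; c; c])).
apply: (cong_trans (y := [:: c; b; a; c; a])).
  exact: (cong_catl [:: c; b] (cong_sym (ch_aba_baa_eq ac))).
apply: (cong_trans (y := [:: c; a; b; c; a])).
  exact: (cong_catr [:: c; a] (ch_cba_cab_eq ab bc)).
apply: (cong_trans (y := [:: b; c; a; c; a])).
  exact: (cong_catr [:: c; a] (ch_cab_bca_eq ab bc)).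
exact: (cong_catl [:: b; c] (ch_aba_baa_eq ac)).
Qed.

Lemma ch_abba_bbaa a b : (a < b)%O -> [:: a; b; b; a] ≡ [:: b; b; a; a].
Proof.
move=> ab; apply: (cancel_square_r (w := [:: a; b; b]) (w' := [:: b; b; a])).
apply: (cong_trans (y := [:: a; b; a; b; a])).
  exact: (cong_ctx [:: a] [:: a] (ch_bba_bab_eq ab)).
apply: (cong_trans (y := [:: b; a; a; b; a])).
  exact: (cong_catr [:: b; a] (ch_aba_baa_eq ab)).
apply: (cong_trans (y := [:: b; a; b; a; a])).
  exact: (cong_catl [:: b; a] (ch_aba_baa_eq ab)).
exact: (cong_catr [:: a; a] (cong_sym (ch_bba_bab_eq ab))).
Qed.

Lemma ch_bbaa_baab a b : (a < b)%O -> [:: b; b; a; a] ≡ [:: b; a; a; b].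
Proof.
move=> ab; apply: (cong_trans (y := [:: b; a; b; a])).
  exact: (cong_catr [:: a] (ch_bba_bab_eq ab)).
apply: cancel_square_l.
apply: (cong_trans (y := [:: b; a; b; b; a])).
  exact: (cong_catr [:: b; a] (ch_bba_bab_eq ab)).
apply: (cong_trans (y := [:: b; a; b; a; b])).
  exact: (cong_catl [:: b; a] (ch_bba_bab_eq ab)).
exact: (cong_catr [:: a; b] (cong_sym (ch_bba_bab_eq ab))).
Qed.

Lemma ch_pair_max_min x1 x2 y : (x1 < y)%O -> (x2 < y)%O ->
  [:: y; x1; x2] ≡ [:: Order.max x1 x2; y; Order.min x1 x2].
Proof.
move=> x1y x2y; rewrite /Order.max /Order.min.
case: (ltgtP x1 x2) => [x12 | x21 | <-].
- exact: ch_cab_bca_eq.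
- apply: (cong_trans (y := [:: y; x2; x1])); first exact: ch_cba_cab_eq.
  exact: ch_cab_bca_eq.
- exact/cong_sym/ch_aba_baa_eq.
Qed.

Lemma ch_push_below a y x1 xs : (a < y)%O -> (x1 < a)%O -> all (fun x => (x < a)%O) xs ->
  exists p x, [/\ (x < a)%O, size p = size xs & y :: x1 :: xs ≡ p ++ [:: y; x]].
Proof.
move=> ay; elim: xs x1 => [|x2 xs IH] x1 x1a /=.
  by exists [::], x1; split=> //; exact: cong_refl.
case/andP=> x2a xsa; have pair := ch_pair_max_min (lt_trans x1a ay) (lt_trans x2a ay).
have min_a : (Order.min x1 x2 < a)%O by rewrite gt_min x1a.
have [p [x [xa <- H]]] := IH _ min_a xsa.
exists (Order.max x1 x2 :: p), x; split=> //.
exact: cong_trans (cong_catr xs pair) (cong_catl [:: Order.max x1 x2] H).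
Qed.

Lemma below_or_last_above a u : a \notin u ->
  all (fun x => (x < a)%O) u \/
  exists u1 y xs, [/\ u = u1 ++ y :: xs, (a < y)%O & all (fun x => (x < a)%O) xs].
Proof.
elim/last_ind: u => [|u z IH]; first by left.
rewrite -cats1 mem_cat mem_seq1 negb_or => /andP[a_notin_u za].
have [z_lt_a | a_lt_z | z_eq_a] := ltgtP z a; last by rewrite z_eq_a eqxx in za.
  case: (IH a_notin_u) => [below | [u1 [y [xs [-> ay xsa]]]]].
    by left; rewrite all_cat below /= z_lt_a.
  by right; exists u1, y, (xs ++ [:: z]); rewrite -catA all_cat xsa /= z_lt_a.
by right; exists u, z, [::].
Qed.

Definition square_slides a u :=
  forall p q, p ++ a :: a :: u ++ a :: q ≡ p ++ a :: u ++ a :: a :: q.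

Lemma square_slides_intro a u : a :: a :: u ++ [:: a] ≡ a :: u ++ [:: a; a] -> square_slides a u.
Proof. by move=> H p q; move/(cong_ctx p q): H; rewrite /= -!catA. Qed.

Lemma square_slides_nil a : square_slides a [::].
Proof. by move=> p q; exact: cong_refl. Qed.

Lemma square_slides_occ a u1 u2 :
  square_slides a u1 -> square_slides a u2 -> square_slides a (u1 ++ a :: u2).
Proof.
move=> slide1 slide2 p q; rewrite -!catA /=.
apply: cong_trans (slide1 p (u2 ++ a :: q)) _.
by have := slide2 (p ++ a :: u1) q; rewrite -!catA.
Qed.

Lemma square_slides_cons_below a z u : (z < a)%O -> square_slides a u -> square_slides a (z :: u).
Proof.
move=> za slide; apply: square_slides_intro; apply: cancel_square_l.
apply: (cong_trans (y := a :: a :: z :: a :: u ++ [:: a])).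
  exact: (cong_ctx [:: a] (u ++ [:: a]) (ch_bba_bab_eq za)).
apply: (cong_trans (y := a :: z :: a :: a :: u ++ [:: a])).
  exact: (cong_catr (a :: u ++ [:: a]) (ch_bba_bab_eq za)).
apply: (cong_trans (y := a :: z :: a :: u ++ [:: a; a])); first exact: (slide [:: a; z] [::]).
exact: (cong_catr (u ++ [:: a; a]) (cong_sym (ch_bba_bab_eq za))).
Qed.

Lemma square_slides_rcons_above a y u :
  (a < y)%O -> square_slides a u -> square_slides a (u ++ [:: y]).
Proof.
move=> ay slide; apply: square_slides_intro.
rewrite -[[:: a; a]]/([:: a] ++ [:: a]) catA.
apply: (cancel_square_r (w := a :: a :: u ++ [:: y]) (w' := a :: (u ++ [:: y]) ++ [:: a])).
rewrite /= -!catA /=.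
apply: (cong_trans (y := a :: a :: u ++ [:: a; y; a])).
  exact: (cong_catl [:: a, a & u] (cong_sym (ch_aba_baa_eq ay))).
apply: (cong_trans (y := a :: u ++ [:: a; a; y; a])); first exact: (slide [::] [:: y; a]).
apply: (cong_trans (y := a :: u ++ [:: a; y; a; a])).
  exact: (cong_catl [:: a & u] (cong_catl [:: a] (ch_aba_baa_eq ay))).
exact: (cong_catl [:: a & u] (cong_catr [:: a] (ch_aba_baa_eq ay))).
Qed.

Lemma square_slides_push a x y u v : (x < a)%O -> (a < y)%O ->
  u ≡ v ++ [:: y; x] -> square_slides a v -> square_slides a u.
Proof.
move=> xa ay uv slide; apply: square_slides_intro.
have uv_ctx w : u ++ w ≡ v ++ y :: x :: w by have := cong_catr w uv; rewrite -catA.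
have yxa : [:: y; x; a] ≡ [:: a; y; x] := ch_cab_bca_eq xa ay.
apply: (cong_trans (y := a :: a :: v ++ [:: y; x; a])).
  exact: (cong_catl [:: a; a] (uv_ctx _)).
apply: (cong_trans (y := a :: a :: v ++ [:: a; y; x])); first exact: (cong_catl [:: a, a & v] yxa).
apply: (cong_trans (y := a :: v ++ [:: a; a; y; x])); first exact: (slide [::] [:: y; x]).
apply: (cong_trans (y := a :: v ++ [:: a; y; x; a])).
  exact: (cong_catl [:: a & v] (cong_catl [:: a] (cong_sym yxa))).
apply: (cong_trans (y := a :: v ++ [:: y; x; a; a])).
  exact: (cong_catl [:: a & v] (cong_catr [:: a] (cong_sym yxa))).
exact: (cong_catl [:: a] (cong_sym (uv_ctx _))).
Qed.

Lemma ch_square_slides a u : square_slides a u.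
Proof.
move: {2}(size u) (leqnn (size u)) => n; elim: n u => [|n IH] u su.
  by move: su; rewrite leqn0 size_eq0 => /eqP->; exact: square_slides_nil.
have [a_in_u | a_notin_u] := boolP (a \in u).
  case/splitPr: a_in_u su => u1 u2; rewrite size_cat /= addnS ltnS => su.
  by apply: square_slides_occ; apply: IH; apply: leq_trans su; rewrite ?leq_addr ?leq_addl.
have [below | [u1 [y [xs [eq_u ay]]]]] := below_or_last_above a_notin_u.
  case: u {a_notin_u} su below => [_ _ | z u su /andP[za _]]; first exact: square_slides_nil.
  exact: square_slides_cons_below za (IH u su).
move: su; rewrite {u a_notin_u}eq_u size_cat /=; case: xs => [|x1 xs] su /=.
  by move=> _; apply: square_slides_rcons_above ay (IH u1 _); rewrite addn1 ltnS in su.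
case/andP=> x1a /(ch_push_below ay x1a)[v [x [xa size_v yxs]]].
have uv : u1 ++ y :: x1 :: xs ≡ (u1 ++ v) ++ [:: y; x] by rewrite -catA; exact: cong_catl.
apply: square_slides_push xa ay uv (IH _ _).
by move: su; rewrite /= size_cat size_v; lia.
Qed.

Lemma ch_rel_perm l r : ch_rel l r -> perm_eq l r.
Proof. by case=> *; apply/permP=> P /=; lia. Qed.

Lemma pow_rel_count_class b l r :
  pow_rel sigma l r -> count_class b (sigma b - 1) l = count_class b (sigma b - 1) r.
Proof.
case=> x; rewrite /count_class mem_nseq mem_seq1 count_nseq /= addn0.
have [<- | _] := eqVneq x b; last by rewrite !mul0n andbF.
rewrite mul1n andbT (leq_trans _ (sigma_ge2 x)) //.
by rewrite -{1}(subnK (ltnW (sigma_ge2 x))) modnDl.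
Qed.

Lemma chs_rel_count_class b l r :
  chs_rel sigma l r -> count_class b (sigma b - 1) l = count_class b (sigma b - 1) r.
Proof. by case=> [/ch_rel_perm/perm_count_class | /pow_rel_count_class]. Qed.

Lemma chs_rel_mem b l r : chs_rel sigma l r -> (b \in l) = (b \in r).
Proof. by move/(chs_rel_count_class b)/(congr1 fst). Qed.

Lemma ChEq_count_class b w w' :
  w ≡ w' -> count_class b (sigma b - 1) w = count_class b (sigma b - 1) w'.
Proof. by apply: cong_invariant => u v l r /(chs_rel_count_class b)/count_class_ctx. Qed.

Lemma ComEq_count_class b w w' :
  ComEq sigma w w' -> count_class b (sigma b - 1) w = count_class b (sigma b - 1) w'.
Proof.
apply: cong_invariant => u v l r [[x' y'] | /(pow_rel_count_class b)/count_class_ctx //].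
by apply/count_class_ctx/perm_count_class; rewrite (perm_catC [:: x']).
Qed.

Fixpoint dup a w := if w is x :: w' then if x == a then a :: w else x :: dup a w' else [::].

Lemma dup_cat a p w : dup a (p ++ w) = if a \in p then dup a p ++ w else p ++ dup a w.
Proof.
elim: p => //= x p ->; rewrite in_cons eq_sym.
by case: eqP => [-> | _] //; case: (a \in p).
Qed.

Lemma dup_notin a w : a \notin w -> dup a w = w.
Proof.
elim: w => //= x w IH; rewrite in_cons negb_or eq_sym.
by case/andP=> /negbTE-> /IH->.
Qed.

Lemma mem_dup a b w : (b \in dup a w) = (b \in w).
Proof.
elim: w => //= x w IH; case: eqP => [-> | _]; last by rewrite !in_cons IH.
by rewrite !in_cons orbA orbb.
Qed.

Lemma count_dup a b w : count_mem b (dup a w) = (a \in w) * (a == b) + count_mem b w.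
Proof.
elim: w => //= x w IH; rewrite in_cons eq_sym.
by case: eqP => [-> | _] /=; rewrite ?IH; lia.
Qed.

Lemma dup_occ a p q : dup a (p ++ a :: q) ≡ p ++ a :: a :: q.
Proof.
elim: p => [|x p IH] /=; first by rewrite eqxx; exact: cong_refl.
case: eqP => [-> | _]; first exact: (ch_square_slides a p [::] q).
exact: (cong_catl [:: x] IH).
Qed.

Lemma dup_congr_square a l1 l2 r1 r2 : l1 ++ a :: a :: l2 ≡ r1 ++ a :: a :: r2 ->
  dup a (l1 ++ a :: l2) ≡ dup a (r1 ++ a :: r2).
Proof.
by move=> H; apply: cong_trans (dup_occ _ _ _) (cong_trans H (cong_sym (dup_occ _ _ _))).
Qed.

Lemma ch_rel_dup x l r : ch_rel l r -> x \in l -> dup x l ≡ dup x r.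
Proof.
case=> [a b c ab bc | a b c ab bc | a b ab | a b ab]; rewrite !inE => /or3P[] /eqP->.
- apply: (@dup_congr_square _ [::] [:: b; a] [::] [:: a; b]).
  exact: (cong_catl [:: c] (ch_cba_cab_eq ab bc)).
- apply: (@dup_congr_square _ [:: c] [:: a] [:: c; a] [::]).
  apply: (cong_trans (y := [:: c; b; a; b])); first exact: (cong_catl [:: c] (ch_bba_bab_eq ab)).
  exact: (cong_catr [:: b] (ch_cba_cab_eq ab bc)).
- exact: (@dup_congr_square _ [:: c; b] [::] [:: c] [:: b] (ch_cbaa_caab ab bc)).
- exact: (@dup_congr_square _ [::] [:: a; b] [:: b] [:: a] (ch_ccab_bcca ab bc)).
- exact: (@dup_congr_square _ [:: c] [:: b] [:: b; c] [::] (ch_caab_bcaa ab bc)).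
- apply: (@dup_congr_square _ [:: c; a] [::] [::] [:: c; a]).
  apply: (cong_trans (y := [:: b; c; a; b])); first exact: (cong_catr [:: b] (ch_cab_bca_eq ab bc)).
  exact: (cong_catl [:: b] (ch_cab_bca_eq ab bc)).
- exact: (@dup_congr_square _ [:: a; b] [::] [:: b; a] [::] (cong_catr [:: a] (ch_aba_baa_eq ab))).
- exact: (@dup_congr_square _ [:: a] [:: a] [::] [:: a; a] (ch_abba_bbaa ab)).
- exact: (@dup_congr_square _ [:: a; b] [::] [:: b; a] [::] (cong_catr [:: a] (ch_aba_baa_eq ab))).
- exact: (@dup_congr_square _ [::] [:: b; a] [::] [:: a; b] (cong_catl [:: b] (ch_bba_bab_eq ab))).
- exact: (@dup_congr_square _ [::] [:: b; a] [::] [:: a; b] (cong_catl [:: b] (ch_bba_bab_eq ab))).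
- exact: (@dup_congr_square _ [:: b; b] [::] [:: b] [:: b] (ch_bbaa_baab ab)).
Qed.

Lemma chs_rel_dup x l r : chs_rel sigma l r -> x \in l -> dup x l ≡ dup x r.
Proof.
case=> [lr | [] a]; first exact: ch_rel_dup.
rewrite mem_nseq => /andP[_ /eqP->].
have -> : dup a (nseq (sigma a) a) = a :: nseq (sigma a) a.
  by case: (sigma a) (sigma_ge2 a) => //= n _; rewrite eqxx.
rewrite /= eqxx; exact: (cong_catl [:: a] (ch_pow_eq a)).
Qed.

Lemma dup_congr a w w' : w ≡ w' -> dup a w ≡ dup a w'.
Proof.
elim=> [u v l r H | w1 | w1 w2 _ | w1 w2 w3 _ IH1 _]; last 1 first.
- exact: cong_trans.
- rewrite !dup_cat -(chs_rel_mem a H).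
  case: (a \in u); first exact: cong_step.
  case al: (a \in l); first exact: (cong_ctx u v (chs_rel_dup H al)).
  exact: cong_step.
- exact: cong_refl.
- exact: cong_sym.
Qed.

Lemma dup_dup_occ a b m n q :
  dup a (dup b (m ++ b :: n ++ a :: q)) ≡ m ++ b :: b :: n ++ a :: a :: q /\
  dup b (dup a (m ++ b :: n ++ a :: q)) ≡ m ++ b :: b :: n ++ a :: a :: q.
Proof.
split.
- apply: cong_trans (dup_congr a (dup_occ b m (n ++ a :: q))) _.
  rewrite (catA m [:: b, b & n] (a :: q)) (catA m [:: b, b & n] (a :: a :: q)).
  exact: dup_occ.
- rewrite (catA m (b :: n) (a :: q)).
  apply: cong_trans (dup_congr b (dup_occ a (m ++ b :: n) q)) _.
  rewrite -catA; exact: dup_occ.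
Qed.

Lemma dup_comm a b w : dup a (dup b w) ≡ dup b (dup a w).
Proof.
have [<- | ab] := eqVneq a b; first exact: cong_refl.
have [a_in_w | a_notin_w] := boolP (a \in w); last first.
  by rewrite (dup_notin a_notin_w) dup_notin ?mem_dup //; exact: cong_refl.
have [b_in_w | b_notin_w] := boolP (b \in w); last first.
  by rewrite (dup_notin b_notin_w) (@dup_notin b) ?mem_dup //; exact: cong_refl.
case/splitPr: a_in_w b_in_w => p q; rewrite mem_cat in_cons eq_sym (negbTE ab) /=.
case/orP=> [/splitPr[m n] | /splitPr[m n]].
  have [ab_occ ba_occ] := dup_dup_occ a b m n q.
  by rewrite -catA; exact: cong_trans ab_occ (cong_sym ba_occ).
have [ba_occ ab_occ] := dup_dup_occ b a p m n.
exact: cong_trans ab_occ (cong_sym ba_occ).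
Qed.

Definition dups s w := foldr dup w s.

Lemma dups_cat s t w : dups (s ++ t) w = dups s (dups t w).
Proof. exact: foldr_cat. Qed.

Lemma mem_dups s w b : (b \in dups s w) = (b \in w).
Proof. by elim: s => //= a s IH; rewrite mem_dup. Qed.

Lemma count_dups s w b : count_mem b (dups s w) = (b \in w) * count_mem b s + count_mem b w.
Proof.
elim: s => [|a s IH] /=; first by rewrite muln0.
rewrite count_dup IH mem_dups; case: eqP => [-> | _] /=; lia.
Qed.

Lemma dups_congr s w w' : w ≡ w' -> dups s w ≡ dups s w'.
Proof. by move=> H; elim: s => //= a s IH; exact: dup_congr. Qed.

Lemma dup_dups a s w : dup a (dups s w) ≡ dups s (dup a w).
Proof.
elim: s => [|b s IH] /=; first exact: cong_refl.
exact: cong_trans (dup_comm a b _) (dup_congr b IH).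
Qed.

Lemma dups_comm s t w : dups s (dups t w) ≡ dups t (dups s w).
Proof.
elim: s => [|a s IH] /=; first exact: cong_refl.
exact: cong_trans (dup_congr a IH) (dup_dups a t _).
Qed.

Lemma dups_perm s s' w : perm_eq s s' -> dups s w ≡ dups s' w.
Proof.
elim: s s' => [|a s IH] s' /=; first by rewrite perm_sym => /perm_nilP->; exact: cong_refl.
move=> ss'; have a_in_s' : a \in s' by rewrite -(perm_mem ss') mem_head.
move: ss'; case/splitPr: a_in_s' => p q.
rewrite perm_sym -(cat1s a q) perm_catCA /= perm_cons perm_sym => /IH IHs.
rewrite dups_cat /=; apply: cong_trans (dup_congr a IHs) _.
by rewrite dups_cat; exact: dup_dups.
Qed.

Lemma nseq_pow_collapse a k : nseq (k * (sigma a - 1)).+1 a ≡ [:: a].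
Proof.
elim: k => [|k IH]; first exact: cong_refl.
have -> : (k.+1 * (sigma a - 1)).+1 = k * (sigma a - 1) + sigma a.
  by have := sigma_ge2 a; rewrite mulSn; lia.
apply: cong_trans IH; rewrite nseqD -[(k * _).+1]addn1 nseqD.
exact: (cong_catl (nseq (k * (sigma a - 1)) a) (ch_pow_eq a)).
Qed.

Lemma dups_nseq_occ a n p q : dups (nseq n a) (p ++ a :: q) ≡ p ++ nseq n.+1 a ++ q.
Proof.
elim: n => [|n IH] /=; first exact: cong_refl.
exact: cong_trans (dup_congr a IH) (dup_occ a p (nseq n a ++ q)).
Qed.

Lemma dups_nseq_id a n w : (a \in w -> (sigma a - 1) %| n) -> dups (nseq n a) w ≡ w.
Proof.
have [a_in_w | a_notin_w] := boolP (a \in w); last first.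
  move=> _; suff -> : dups (nseq n a) w = w by exact: cong_refl.
  by elim: n => //= n ->; rewrite dup_notin.
move=> /(_ isT)/dvdnP[k ->]; case/splitPr: a_in_w => p q.
exact: cong_trans (dups_nseq_occ _ _ _ _) (cong_ctx p q (nseq_pow_collapse a k)).
Qed.

Lemma dups_id s w : (forall b, b \in w -> (sigma b - 1) %| count_mem b s) -> dups s w ≡ w.
Proof.
move=> s_dvd; have s_blocks : perm_eq s (flatten [seq nseq (count_mem c s) c | c <- undup s]).
  by rewrite perm_sym perm_count_undup.
apply: cong_trans (dups_perm w s_blocks) _.
elim: (undup s) => [|c cs IH] /=; first exact: cong_refl.
rewrite dups_cat; apply: cong_trans (dups_nseq_id _) IH.
by rewrite mem_dups; exact: s_dvd.
Qed.

Lemma Ch2Eq_dups w w' : Ch2Eq w w' -> exists s t, dups s w ≡ dups t w'.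
Proof.
elim=> [u v l r [lr | [] a] | w1 | w1 w2 _ [s [t st]] | w1 w2 w3 _ [s [t st]] _ [s' [t' st']]].
- by exists [::], [::]; apply: cong_step; left.
- by exists [::], [:: a]; exact: cong_sym (dup_occ a u v).
- by exists [::], [::]; exact: cong_refl.
- by exists t, s; exact: cong_sym.
- exists (s' ++ s), (t ++ t'); rewrite !dups_cat.
  apply: cong_trans (dups_congr s' st) _; apply: cong_trans (dups_comm _ _ _) _.
  exact: dups_congr.
Qed.

(* Every letter b occurs a multiple of sigma b - 1 times in pad s ++ s. *)
Definition pad s := flatten [seq nseq (sigma c - 2) c | c <- s].

Lemma count_pad s b : count_mem b (pad s) = (sigma b - 2) * count_mem b s.
Proof.
elim: s => [|c s IH] /=; first by rewrite muln0.
by rewrite count_cat IH count_nseq /=; case: eqP => [-> | _] /=; nia.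
Qed.

Lemma dups_pad_id s t w : (forall b, b \in w -> count_mem b s = count_mem b t %[mod sigma b - 1]) ->
  dups (pad s ++ t) w ≡ w.
Proof.
move=> st_mod; apply: dups_id => b /st_mod st_b.
rewrite /dvdn count_cat count_pad -modnDmr -st_b modnDmr addnC -mulSn.
by rewrite subnSK ?sigma_ge2 // modnMr.
Qed.

Lemma dups_count_mod s t w w' : dups s w ≡ dups t w' -> ComEq sigma w w' ->
  forall b, b \in w' -> count_mem b s = count_mem b t %[mod sigma b - 1].
Proof.
move=> st ww' b b_in_w'.
move: st ww' => /(ChEq_count_class b)[_ st_count] /(ComEq_count_class b)[w_w' ww'_mod].
move: st_count; rewrite !count_dups w_w' b_in_w' !mul1n.
by rewrite -modnDmr ww'_mod modnDmr => /eqP; rewrite eqn_modDr => /eqP.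
Qed.

End ChineseMonoid.

Theorem mainTheorem2 (d : Order.disp_t) (A : finOrderType d) (sigma : A -> nat)
  (hsigma : forall a : A, (2 <= sigma a)%N) (x y : seq A) :
  Ch2Eq x y -> ComEq sigma x y -> ChEq sigma x y.
Proof.
move=> xy_Ch2 xy_Com; rewrite /ChEq.
have [s [t st]] := Ch2Eq_dups hsigma xy_Ch2.
apply: cong_trans (cong_sym (dups_pad_id hsigma (s := s) (t := s) (w := x) (fun _ _ => erefl))) _.
rewrite dups_cat; apply: cong_trans (dups_congr hsigma _ st) _.
by rewrite -dups_cat; exact: (dups_pad_id hsigma (dups_count_mod hsigma st xy_Com)).
Qed.
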